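(* Let $L\subseteq Q$ be a dense extension of Lie algebras. Then $[L,L]\subseteq [Q,Q]$ is also a dense extension.
   Context: Lie algebras over a commutative unital ring $\Phi$; $[L,L]$ is the span of brackets of elements of $L$. For a Lie algebra $Q$, $M(Q)$ is the subalgebra of $\mathrm{End}_\Phi(Q)$ generated by the identity and all $\mathrm{ad}_x$, $x\in Q$, where $\mathrm{ad}_x(y)=[x,y]$. An extension $L\subseteq Q$ (i.e. $L$ a subalgebra of $Q$) is dense if the only $\mu\in M(Q)$ with $\mu(L)=0$ is $\mu=0$. *)

From mathcomp Require Import all_boot all_order all_algebra.
Set Implicit Arguments. Unset Strict Implicit. Unset Printing Implicit Defensive.
Import GRing.Theory.
Local Open Scope ring_scope.

Section Lie.
Variables (Phi : comPzRingType) (Q : lmodType Phi).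

Record is_lie_bracket (br : Q -> Q -> Q) : Prop := IsLieBracket {
  lie_addl : forall x y z, br (x + y) z = br x z + br y z;
  lie_addr : forall x y z, br x (y + z) = br x y + br x z;
  lie_scalel : forall (a : Phi) x y, br (a *: x) y = a *: br x y;
  lie_scaler : forall (a : Phi) x y, br x (a *: y) = a *: br x y;
  lie_alt : forall x, br x x = 0;
  lie_jacobi : forall x y z, br x (br y z) + br y (br z x) + br z (br x y) = 0
}.

Variable br : Q -> Q -> Q.

Record is_subalgebra (L : Q -> Prop) : Prop := IsSubalgebra {
  sub0 : L 0;
  subD : forall x y, L x -> L y -> L (x + y);
  subZ : forall (a : Phi) x, L x -> L (a *: x);
  subBr : forall x y, L x -> L y -> L (br x y)
}.

Inductive derived (L : Q -> Prop) : Q -> Prop :=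
  | derived0 : derived L 0
  | derived_br : forall x y, L x -> L y -> derived L (br x y)
  | derivedD : forall u v, derived L u -> derived L v -> derived L (u + v)
  | derivedZ : forall (a : Phi) u, derived L u -> derived L (a *: u).

Definition ad (x : Q) : Q -> Q := fun y => br x y.

(* For a subalgebra P of Q, the maps Q -> Q in the unital subalgebra of
   End_Phi(Q) generated by id and the ad_x, x in P. Their restrictions to P
   (which is ad-invariant) are exactly the elements of M(P) <= End_Phi(P);
   for P = Q this is literally M(Q). *)
Inductive Malg (P : Q -> Prop) : (Q -> Q) -> Prop :=
  | Malg_id : Malg P (fun y => y)
  | Malg_ad : forall x, P x -> Malg P (ad x)
  | Malg_add : forall f g, Malg P f -> Malg P g -> Malg P (fun y => f y + g y)
  | Malg_scale : forall (a : Phi) f, Malg P f -> Malg P (fun y => a *: f y)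
  | Malg_comp : forall f g, Malg P f -> Malg P g -> Malg P (fun y => f (g y)).

Definition dense_ext (P L : Q -> Prop) : Prop :=
  forall mu, Malg P mu -> (forall y, L y -> mu y = 0) ->
    forall y, P y -> mu y = 0.

End Lie.

(* If mu in M(Q) kills [L,L], then for x in L the map mu o ad_x lies in M(Q)
   and kills L, so by density mu kills [x,Q]. By antisymmetry mu o ad_q then
   kills L for every q in Q, and density again gives mu([q,p]) = 0 for all
   q, p, i.e. mu kills [Q,Q]. *)
From mathcomp Require Import all_boot all_order all_algebra.
Set Implicit Arguments. Unset Strict Implicit.
Local Open Scope ring_scope.
Import GRing.Theory.

Section DenseDerived.
Variables (Phi : comPzRingType) (Q : lmodType Phi) (br : Q -> Q -> Q).
Hypothesis lieQ : is_lie_bracket br.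

Lemma lie_anticomm x y : br y x = - br x y.
Proof.
apply/eqP; rewrite -subr_eq0 opprK.
have := lie_alt lieQ (x + y).
rewrite (lie_addl lieQ) !(lie_addr lieQ) !(lie_alt lieQ) add0r addr0.
by rewrite addrC => ->.
Qed.

Lemma Malg_linear (P : Q -> Prop) mu :
  Malg br P mu -> {morph mu : a b / a + b} /\ forall c : Phi, {morph mu : a / c *: a}.
Proof.
elim=> [|x _|f g _ [fD fZ] _ [gD gZ]|c f _ [fD fZ]|f g _ [fD fZ] _ [gD gZ]].
- by split.
- by split=> [a b|c a]; rewrite /ad ?(lie_addr lieQ) ?(lie_scaler lieQ).
- by split=> [a b|c' a]; [rewrite fD gD addrACA|rewrite fZ gZ scalerDr].
- by split=> [a b|c' a]; [rewrite fD scalerDr|rewrite fZ !scalerA mulrC].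
- by split=> [a b|c a]; [rewrite gD fD|rewrite gZ fZ].
Qed.

Lemma Malg_sub (P P' : Q -> Prop) mu :
  (forall x, P x -> P' x) -> Malg br P mu -> Malg br P' mu.
Proof.
move=> sPP'; elim=> *;
  [exact: Malg_id|apply: Malg_ad; exact: sPP'|exact: Malg_add|exact: Malg_scale|exact: Malg_comp].
Qed.

Lemma derived_sub (L P : Q -> Prop) :
  (forall x, L x -> P x) -> forall z, derived br L z -> derived br P z.
Proof.
move=> sLP z; elim=> *;
  [exact: derived0|apply: derived_br; exact: sLP|exact: derivedD|exact: derivedZ].
Qed.

Lemma Malg_derived_eq0 (P P' : Q -> Prop) mu :
  Malg br P' mu -> (forall x y, P x -> P y -> mu (br x y) = 0) ->
  forall z, derived br P z -> mu z = 0.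
Proof.
move=> /Malg_linear[muD muZ] mu_br z; elim=> [|x y|u v _ mu_u _ mu_v|a u _ mu_u].
- by have := muZ 0 0; rewrite !scale0r.
- exact: mu_br.
- by rewrite muD mu_u mu_v addr0.
- by rewrite muZ mu_u scaler0.
Qed.

Lemma dense_ext_ad_eq0 (P L : Q -> Prop) mu x :
  dense_ext br P L -> Malg br P mu -> P x ->
  (forall y, L y -> mu (br x y) = 0) -> forall q, P q -> mu (br x q) = 0.
Proof.
move=> denseL Mmu Px; apply: denseL (fun y => mu (ad br x y)) _.
exact: Malg_comp Mmu (Malg_ad _ Px).
Qed.

End DenseDerived.

Theorem mainTheorem12 (Phi : comPzRingType) (Q : lmodType Phi)
  (br : Q -> Q -> Q) (L : Q -> Prop) :
  is_lie_bracket br ->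
  is_subalgebra br L ->
  dense_ext br (fun _ => True) L ->
  (forall x, derived br L x -> derived br (fun _ => True) x) /\
  dense_ext br (derived br (fun _ => True)) (derived br L).
Proof.
(* The argument never uses that L is closed under the bracket. *)
move=> lieQ _ denseL; split; first exact: derived_sub.
move=> mu Mmu mu_LL.
have MQmu := Malg_sub (fun _ _ => I) Mmu.
have [_ muZ] := Malg_linear lieQ Mmu.
have mu_LQ x q : L x -> mu (br x q) = 0.
  move=> Lx; apply: dense_ext_ad_eq0 denseL MQmu I _ q I => y Ly.
  by apply: mu_LL; apply: derived_br.
have mu_QQ q p : mu (br q p) = 0.
  apply: dense_ext_ad_eq0 denseL MQmu I _ p I => y Ly.
  by rewrite (lie_anticomm lieQ) -scaleN1r muZ mu_LQ // scaler0.
by apply: (Malg_derived_eq0 lieQ Mmu) => x y _ _; apply: mu_QQ.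
Qed.
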